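(* Let $C_0$ be a binary linear $[n_0,n_0-r_0]_2 3$ code whose parity-check matrix $H_0=[h_1\cdots h_{n_0}]$ admits a $(3,0)$-partition $\mathcal P_0$ into $p_0$ subsets. Let $\mathcal V_{2m}$ be a binary linear $[n_{2m},n_{2m}-2m]_2 2$ code with parity-check matrix $\mathcal H_{2m}$ admitting a $2$-partition $\mathcal P_{2m}$ into $p_{2m}$ subsets. Let $m\ge2$ with $2^m-1\ge p_0$, choose an indicator assignment with all $\beta_j\in\mathbb{F}_{2^m}^*=\mathbb{F}_{2^m}\setminus\{0\}$, let $$D_4=\begin{bmatrix}0_{r_0}&0_{r_0}\\ W_m&0_m\\ 0_{2m}&\mathcal H_{2m}\end{bmatrix},\qquad H_C=[D_4\ A_3(h_1,\beta_1)\ \cdots\ A_3(h_{n_0},\beta_{n_0})].$$ Then $H_C$ is the parity-check matrix of a binary linear code $C$ of length $n=2^m(n_0+1)+n_{2m}-1$, codimension $r=r_0+3m$ and covering radius $3$. Moreover: $H_C$ admits a $(3,0)$-partition into at most $p_0+p_{2m}+1$ subsets and a $(3,1)$-partition into at most $p_0+p_{2m}+3$ subsets; if $H_0$ (resp. $\mathcal H_{2m}$) has three columns summing to zero lying in three distinct subsets of $\mathcal P_0$ (resp. $\mathcal P_{2m}$), then $H_C$ admits a $(3,1)$-partition into at most $p_0+p_{2m}+1$ subsets; and if every vector of $\mathbb{F}_2^{2m}$ is a sum of $2$ or $3$ columns of $\mathcal H_{2m}$, then the trivial partition of $H_C$ (into singletons) is a $(3,2)$-partition, i.e. $C$ is a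 $(3,2)$-object.
   Context: Covering radius of a binary linear code with $r\times n$ parity-check matrix $H$: smallest $R$ such that every vector of $\mathbb{F}_2^r$ is a sum of at most $R$ columns of $H$. $[n,n-r]_2R$: length $n$, codimension $r$, covering radius $R$. For $0\le\ell\le R$, an $(R,\ell)$-partition of $H$ is a partition of its columns into nonempty subsets such that every vector of $\mathbb{F}_2^r$ (including zero) is the sum of at least $\ell$ and at most $R$ columns lying in pairwise distinct subsets (zero = empty sum when $\ell=0$); a code is an $(R,\ell)$-object if a parity-check matrix admits an $(R,\ell)$-partition. A $2$-partition means a $(2,0)$-partition. Construction notation: identify $\mathbb{F}_2^m$ with $\mathbb{F}_{2^m}$ via a fixed basis. For $h\in\mathbb{F}_2^{r_0}$ and $\beta\in\mathbb{F}_{2^m}$, $A_3(h,\beta)$ is the $(r_0+3m)\times2^m$ matrix with columns $(h,\xi,\beta\xi,\beta^2\xi)^T$, $\xi\in\mathbb{F}_{2^m}$. $W_m$ is the $m\times(2^m-1)$ matrix of all nonzero vectors of $\mathbb{F}_2^m$; $0_v$ denotes a zero block with $v$ rows. An indicator assignment for $H_0,\mathcal P_0$ assigns $\beta_j$ to column $h_j$ with $\beta_i\ne\beta_j$ whenever $h_i,h_j$ lie in distinct subsets of $\mathcal P_0$. *)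

From HB Require Import structures.
From mathcomp Require Import all_boot all_order all_algebra all_field.
Set Implicit Arguments. Unset Strict Implicit. Unset Printing Implicit Defensive.
Import GRing.Theory.
Local Open Scope ring_scope.

Definition colsum r n (H : 'M['F_2]_(r, n)) (S : {set 'I_n}) : 'cV['F_2]_r :=
  \sum_(j in S) col j H.

Definition covers r n (H : 'M['F_2]_(r, n)) (R : nat) : Prop :=
  forall v : 'cV['F_2]_r, exists S : {set 'I_n}, (#|S| <= R)%N /\ colsum H S = v.

Definition covering_radius r n (H : 'M['F_2]_(r, n)) (R : nat) : Prop :=
  covers H R /\ forall R', covers H R' -> (R <= R')%N.

(* f : 'I_n -> 'I_p encodes a partition of the columns of H into p nonempty
   subsets (column j lies in subset f j); it is an (R,l)-partition if every
   vector is a sum of at least l and at most R columns lying in pairwise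
   distinct subsets. *)
Definition RL_partition r n (H : 'M['F_2]_(r, n)) (R l : nat) p (f : 'I_n -> 'I_p)
  : Prop :=
  (forall k : 'I_p, exists j, f j = k) /\
  forall v : 'cV['F_2]_r, exists S : {set 'I_n},
    (l <= #|S| <= R)%N /\ {in S &, injective f} /\ colsum H S = v.

Definition admits_partition_atmost r n (H : 'M['F_2]_(r, n)) (R l k : nat) : Prop :=
  exists p, (p <= k)%N /\ exists f : 'I_n -> 'I_p, RL_partition H R l f.

Definition three_cols_zero r n (H : 'M['F_2]_(r, n)) p (f : 'I_n -> 'I_p) : Prop :=
  exists i j k : 'I_n, [/\ f i != f j, f i != f k, f j != f k &
                           col i H + col j H + col k H = 0].

(* column labels of H_C: nonzero vectors of F_2^m (the columns of W_m),
   columns of H_{2m}, and pairs (j, xi) for the blocks A_3(h_j, beta_j) *)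
Definition nzvec m := {w : 'cV['F_2]_m | w != 0}.
Definition HC_index (F : finFieldType) m n2 n0 :=
  ((nzvec m + 'I_n2) + ('I_n0 * F))%type.

Definition HC_col (F : finFieldType) r0 m n0 n2 (phi : F -> 'cV['F_2]_m)
  (H0 : 'M['F_2]_(r0, n0)) (H2 : 'M['F_2]_(m + m, n2)) (beta : 'I_n0 -> F)
  (x : HC_index F m n2 n0) : 'cV['F_2]_(r0 + (m + (m + m))) :=
  match x with
  | inl (inl w) => col_mx 0 (col_mx (val w) 0)
  | inl (inr j) => col_mx 0 (col_mx 0 (col j H2))
  | inr (j, xi) => col_mx (col j H0)
       (col_mx (phi xi) (col_mx (phi (beta j * xi)) (phi (beta j ^+ 2 * xi))))
  end.

(* H_C = [D_4  A_3(h_1,beta_1) ... A_3(h_{n0},beta_{n0})] (columns listed in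
   the enumeration order of HC_index) *)
Definition HC (F : finFieldType) r0 m n0 n2 (phi : F -> 'cV['F_2]_m)
  (H0 : 'M['F_2]_(r0, n0)) (H2 : 'M['F_2]_(m + m, n2)) (beta : 'I_n0 -> F)
  : 'M['F_2]_(r0 + (m + (m + m)), #|{: HC_index F m n2 n0}|) :=
  \matrix_(i, j) HC_col phi H0 H2 beta (enum_val j) i 0.

From HB Require Import structures.
From mathcomp Require Import all_boot all_order all_algebra all_field.
From mathcomp Require Import ring zify.
Set Implicit Arguments. Unset Strict Implicit. Unset Printing Implicit Defensive.
Import GRing.Theory.
Local Open Scope ring_scope.

(* Write v = (u, a, b, c) along the row blocks of H_C and cover u by a set S of at
   most three columns h_j of H_0 in distinct classes of P_0.  The columns of the
   blocks A_3(h_j, beta_j), j in S, contribute (sum xi_j, sum beta_j xi_j,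
   sum beta_j^2 xi_j) below u; since the beta_j are distinct and nonzero, this
   Vandermonde system absorbs all of (a, b, c) when |S| = 3, absorbs (b, c) when
   |S| = 2 (one column of W_m then supplies a), and absorbs a when |S| = 1 (two
   columns of H_2m then supply (b, c)).  The refinements rest on
   characteristic 2: three distinct nonzero vectors of F_2^m sum to zero, which
   gives a (3,1)-partition once W_m is split into three classes; and a column of
   W_m is a sum of two, a column of A_3(h_j, beta_j) a sum of three other columns
   of the same block, which gives the (3,2) property. *)

Lemma addrr_F2mx r n (A : 'M['F_2]_(r, n)) : A + A = 0.
Proof. by apply/matrixP => i j; rewrite !mxE; case: (A i j) => -[|[|k]] Hk; apply/val_inj. Qed.

Section ColumnSums.
Variables (r n : nat) (H : 'M['F_2]_(r, n)).

Lemma colsum_addcol (T : {set 'I_n}) i :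
  exists2 T' : {set 'I_n}, (#|T'| <= #|T|.+1)%N & colsum H T' = colsum H T + col i H.
Proof.
have [iT | iNT] := boolP (i \in T).
  exists (T :\ i); first by rewrite (cardsD1 i T) iT leqW.
  by rewrite /colsum (big_setD1 i iT) /= addrAC addrr_F2mx add0r.
by exists (i |: T); rewrite ?cardsU1 ?iNT // /colsum big_setU1 //= addrC.
Qed.

Lemma admits_partition_covers R l q : admits_partition_atmost H R l q -> covers H R.
Proof. by case=> p [_ [f [_ cov]]] v; have [S [/andP[_ ?] [_ ?]]] := cov v; exists S. Qed.

Lemma covers_rank R : covers H R -> \rank H = r.
Proof.
move=> cov; rewrite -mxrank_tr; apply/eqP; change (row_full H^T).
rewrite -sub1mx; apply/row_subP => i.
have [S [_ eS]] := cov (row i 1%:M)^T.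
rewrite -[row i _]trmxK -eS /colsum raddf_sum /=.
by apply: summx_sub => j _; rewrite tr_col row_sub.
Qed.

End ColumnSums.

Lemma covers_usubmx r1 r2 n (H : 'M['F_2]_(r1 + r2, n)) R :
  covers H R -> covers (usubmx H) R.
Proof.
move=> cov v; have [S [cS eS]] := cov (col_mx v 0); exists S; split => //.
have -> : colsum (usubmx H) S = usubmx (colsum H S).
  by rewrite /colsum raddf_sum; apply: eq_bigr => j _; apply/matrixP => i k; rewrite !mxE.
by rewrite eS col_mxKu.
Qed.

Lemma covers_subcols r n n' (H : 'M['F_2]_(r, n)) (H' : 'M['F_2]_(r, n')) R :
  (forall j, col j H' = 0 \/ exists i, col j H' = col i H) -> covers H' R -> covers H R.
Proof.
move=> subH' cov v; have [S' [cS' <-]] := cov v.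
suff [T cT eT] : exists2 T : {set 'I_n}, (#|T| <= #|S'|)%N & colsum H T = colsum H' S'.
  by exists T; split=> //; apply: leq_trans cS'.
rewrite -sum1_card /colsum.
elim/big_rec2: _ => [|j w k _ [T cT <-]]; first by exists set0; rewrite ?cards0 ?big_set0.
have [-> | [i ->]] := subH' j; first by exists T; [exact: leqW | rewrite add0r].
have [T' cT' eT'] := colsum_addcol H T i.
by exists T'; [exact: leq_trans cT' _ | rewrite addrC].
Qed.

Lemma sum_col_mx (R : zmodType) (I : Type) (s : seq I) (P : pred I) a b c
    (f : I -> 'M[R]_(a, c)) (g : I -> 'M[R]_(b, c)) :
  \sum_(i <- s | P i) col_mx (f i) (g i) =
  col_mx (\sum_(i <- s | P i) f i) (\sum_(i <- s | P i) g i).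
Proof.
by apply: (big_rec3 (fun x y z => x = col_mx y z)) => [|i x y z _ ->];
  rewrite ?col_mx0 ?add_col_mx.
Qed.

Lemma map_uniq_inj_in (T1 T2 : eqType) (f : T1 -> T2) (s : seq T1) :
  uniq (map f s) -> {in s &, injective f}.
Proof.
elim: s => //= x s IHs /andP[fx_s fs_uniq] y z; rewrite !inE.
case/predU1P=> [-> | ys]; case/predU1P=> [-> | zs] //.
- by move=> e; case/negP: fx_s; rewrite e map_f.
- by move=> e; case/negP: fx_s; rewrite -e map_f.
- exact: IHs.
Qed.

Section ColumnFamilies.
Variables (r : nat) (I K : finType) (C : I -> 'cV['F_2]_r) (cls : I -> K).

Definition mx_of_cols : 'M['F_2]_(r, #|I|) := \matrix_(i, j) C (enum_val j) i 0.

Definition distinct_sum (k : nat) (v : 'cV['F_2]_r) : Prop :=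
  exists S : {set I}, [/\ #|S| = k, {in S &, injective cls} & \sum_(x in S) C x = v].

Definition covers_distinct (R l : nat) : Prop :=
  forall v, exists2 k, (l <= k <= R)%N & distinct_sum k v.

Lemma col_mx_of_cols j : col j mx_of_cols = C (enum_val j).
Proof. by apply/matrixP => i k; rewrite !mxE (ord1 k). Qed.

Lemma RL_partition_mx_of_cols R l (f : 'I_#|I| -> 'I_#|K|) :
  (forall j, f j = enum_rank (cls (enum_val j))) -> (forall c, exists x, cls x = c) ->
  covers_distinct R l -> RL_partition mx_of_cols R l f.
Proof.
move=> fE cls_surj cov; split=> [c | v].
  have [x xc] := cls_surj (enum_val c).
  by exists (enum_rank x); rewrite fE enum_rankK xc enum_valK.
have [k lkR [S [cS injS eS]]] := cov v.
have rank_inj : {in S &, injective (@enum_rank I)} by move=> x y _ _ /enum_rank_inj.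
exists (enum_rank @: S); split; first by rewrite card_in_imset // cS.
split.
  move=> _ _ /imsetP[x xS ->] /imsetP[y yS ->].
  by rewrite !fE !enum_rankK => /enum_rank_inj/injS ->.
rewrite -eS /colsum big_imset //=.
by apply: eq_bigr => x _; rewrite col_mx_of_cols enum_rankK.
Qed.

Lemma admits_partition_mx_of_cols R l q :
  (forall c, exists x, cls x = c) -> covers_distinct R l -> (#|K| <= q)%N ->
  admits_partition_atmost mx_of_cols R l q.
Proof.
move=> cls_surj cov Kq; exists #|K|; split=> //.
by exists (fun j => enum_rank (cls (enum_val j))); apply: RL_partition_mx_of_cols.
Qed.

Lemma distinct_sum_seq (s : seq I) :
  uniq (map cls s) -> distinct_sum (size s) (\sum_(x <- s) C x).
Proof.
move=> cls_uniq; have s_uniq := map_uniq cls_uniq.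
exists [set x in s]; split; first by rewrite cardsE; apply/card_uniqP.
  by move=> x y; rewrite !inE; apply: map_uniq_inj_in.
by rewrite (big_uniq _ s_uniq); apply: eq_bigl => x; rewrite inE.
Qed.

Lemma distinct_sum_set (S : {set I}) :
  {in S &, injective cls} -> distinct_sum #|S| (\sum_(x in S) C x).
Proof.
move=> cls_inj; rewrite cardE -big_enum; apply: distinct_sum_seq.
by rewrite map_inj_in_uniq ?enum_uniq // => x y; rewrite !mem_enum; apply: cls_inj.
Qed.

Lemma distinct_sum0 v : distinct_sum 0 v -> v = 0.
Proof. by case=> S [/eqP]; rewrite cards_eq0 => /eqP-> _ <-; rewrite big_set0. Qed.

Lemma covers_distinct1_of_zero_sum R : covers_distinct R 0 ->
  forall k, (0 < k <= R)%N -> distinct_sum k 0 -> covers_distinct R 1.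
Proof.
move=> cov k kR zero v; have [-> | v0] := eqVneq v 0; first by exists k.
have [[|k'] k'R sum_v] := cov v; last by exists k'.+1.
by move: v0; rewrite (distinct_sum0 sum_v) eqxx.
Qed.

Lemma distinct_sum1 v : distinct_sum 1 v -> exists x, v = C x.
Proof. by case=> S [/eqP/cards1P[x ->] _ <-]; exists x; rewrite big_set1. Qed.

End ColumnFamilies.

Lemma distinct_sum_refine r (I K K' : finType) (C : I -> 'cV['F_2]_r)
    (cls : I -> K) (cls' : I -> K') (g : K' -> K) k v :
  (forall x, g (cls' x) = cls x) -> distinct_sum C cls k v -> distinct_sum C cls' k v.
Proof.
move=> gE [S [cS injS eS]]; exists S; split=> // x y xS yS e.
by apply: injS; rewrite // -!gE e.
Qed.

Lemma distinct_sum_map r r' (I J K K' : finType) (C : J -> 'cV['F_2]_r) (cls : J -> K)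
    (D : I -> 'cV['F_2]_r') (clsD : I -> K') (e : I -> J) (g : K' -> K)
    (L : 'cV['F_2]_r' -> 'cV['F_2]_r) k v :
  injective e -> injective g -> (forall x, cls (e x) = g (clsD x)) ->
  {morph L : u w / u + w} -> (forall x, C (e x) = L (D x)) ->
  distinct_sum D clsD k v -> distinct_sum C cls k (L v).
Proof.
move=> e_inj g_inj clsE LD CE [S [cS injS eS]]; exists (e @: S); split.
- by rewrite card_imset.
- move=> _ _ /imsetP[x xS ->] /imsetP[y yS ->].
  by rewrite !clsE => /g_inj/injS-> //.
have L0 : L 0 = 0 by apply: (addrI (L 0)); rewrite -LD !addr0.
rewrite big_imset /=; last by move=> ? ? _ _ /e_inj.
by rewrite -eS (big_morph L LD L0); apply: eq_bigr.
Qed.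

Definition sum_cls (A B KA KB : Type) (fA : A -> KA) (fB : B -> KB) (x : A + B) : KA + KB :=
  match x with inl a => inl (fA a) | inr b => inr (fB b) end.

Lemma distinct_sum_add r (A B KA KB : finType) (C : A + B -> 'cV['F_2]_r)
    (fA : A -> KA) (fB : B -> KB) k1 k2 v1 v2 :
  distinct_sum (C \o inl) fA k1 v1 -> distinct_sum (C \o inr) fB k2 v2 ->
  distinct_sum C (sum_cls fA fB) (k1 + k2) (v1 + v2).
Proof.
move=> [S1 [<- inj1 <-]] [S2 [<- inj2 <-]].
pose S := [set x | match x with inl a => a \in S1 | inr b => b \in S2 end].
have sumS (V : nmodType) (G : A + B -> V) :
    \sum_(x in S) G x = \sum_(a in S1) G (inl a) + \sum_(b in S2) G (inr b).
  by rewrite big_sumType; congr (_ + _); apply: eq_bigl => ?; rewrite inE.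
exists S; split; first by rewrite -!sum1_card sumS.
  case=> [a|b] [a'|b']; rewrite !inE //= => xS yS [] e.
    by rewrite (inj1 a a').
  by rewrite (inj2 b b').
by rewrite sumS.
Qed.

Lemma exists_notin (T : finType) (A : {set T}) : (#|A| < #|T|)%N -> exists x, x \notin A.
Proof.
move=> AT; have /card_gt0P[x] : (0 < #|~: A|)%N by rewrite cardsCs setCK subn_gt0.
by rewrite inE; exists x.
Qed.

Section CharTwo.
Variables (V : finZmodType) (addxx : forall x : V, x + x = 0).

Lemma char2_add_eq0 (x y : V) : (x + y == 0) = (x == y).
Proof.
have Ny : - y = y by apply/eqP; rewrite eq_sym -addr_eq0 addxx.
by rewrite addr_eq0 Ny.
Qed.

Lemma char2_addK (x y : V) : x + y + y = x.
Proof. by rewrite -addrA addxx addr0. Qed.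

Lemma sum_two_distinct_nonzero (w : V) : (2 < #|V|)%N -> w != 0 ->
  exists w1 w2, [/\ w1 != 0, w2 != 0, w1 != w2 & w1 + w2 = w].
Proof.
move=> V2 w0; have [w1] : exists w1, w1 \notin [set 0; w].
  by apply: exists_notin; apply: leq_ltn_trans V2; rewrite cards2 ltnS leq_b1.
rewrite !inE negb_or => /andP[w10 w1w]; exists w1, (w1 + w); split=> //.
- by rewrite char2_add_eq0.
- by rewrite -char2_add_eq0 addrA addxx add0r.
- by rewrite addrA addxx add0r.
Qed.

Lemma sum_three_distinct (x : V) : (3 < #|V|)%N ->
  exists y1 y2 y3, [/\ y1 != y2, y1 != y3, y2 != y3 & y1 + y2 + y3 = x].
Proof.
move=> V3; have [y1] : exists y1, y1 \notin [set x].
  by apply: exists_notin; apply: leq_ltn_trans (ltnW V3); rewrite cards1.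
rewrite inE => y1x; have [y2] : exists y2, y2 \notin [set x; y1].
  by apply: exists_notin; apply: leq_ltn_trans (ltnW V3); rewrite cards2 ltnS leq_b1.
rewrite !inE negb_or => /andP[y2x y2y1]; exists (x + y1 + y2), y1, y2; split.
- by rewrite -char2_add_eq0 addrAC char2_addK char2_add_eq0 eq_sym.
- by rewrite -char2_add_eq0 char2_addK char2_add_eq0 eq_sym.
- by rewrite eq_sym.
- by rewrite [x + y1 + y2 + y1]addrAC !char2_addK.
Qed.

Lemma three_distinct_nonzero_sum0 : (2 < #|V|)%N ->
  exists e1 e2 e3 : V, [/\ e1 != 0, e2 != 0, e3 != 0, uniq [:: e1; e2; e3] & e1 + e2 + e3 = 0].
Proof.
move=> V2; have [w] : exists w : V, w \notin [set 0].
  by apply: exists_notin; apply: leq_ltn_trans (ltnW V2); rewrite cards1.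
rewrite inE => w0; have [w1 [w2 [w10 w20 w12 sum_w]]] := sum_two_distinct_nonzero V2 w0.
exists w1, w2, w; split=> //; last by rewrite sum_w addxx.
rewrite /= !inE !negb_or w12 /= andbT -sum_w -2!char2_add_eq0.
by rewrite addrA addxx add0r [w2 + _]addrC char2_addK w20 w10.
Qed.

End CharTwo.

Section Vandermonde.
Variable K : fieldType.

Lemma vandermonde2_solvable (b1 b2 y1 y2 : K) : b1 != 0 -> b2 != 0 -> b1 != b2 ->
  exists x1 x2, b1 * x1 + b2 * x2 = y1 /\ b1 ^+ 2 * x1 + b2 ^+ 2 * x2 = y2.
Proof.
move=> b10 b20 b12; have d12 : b1 - b2 != 0 by rewrite subr_eq0.
have d21 : b2 - b1 != 0 by rewrite subr_eq0 eq_sym.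
exists ((y2 - b2 * y1) / (b1 * (b1 - b2))), ((y2 - b1 * y1) / (b2 * (b2 - b1))).
by split; field; rewrite ?mulf_neq0 ?b10 ?b20 ?d12 ?d21.
Qed.

Lemma vandermonde3_solvable (b1 b2 b3 y0 y1 y2 : K) :
  b1 != b2 -> b1 != b3 -> b2 != b3 ->
  exists x1 x2 x3, [/\ x1 + x2 + x3 = y0, b1 * x1 + b2 * x2 + b3 * x3 = y1 &
                       b1 ^+ 2 * x1 + b2 ^+ 2 * x2 + b3 ^+ 2 * x3 = y2].
Proof.
move=> b12 b13 b23.
have [d12 d13 d23] : [/\ b1 - b2 != 0, b1 - b3 != 0 & b2 - b3 != 0] by rewrite !subr_eq0.
have [d21 d31 d32] : [/\ b2 - b1 != 0, b3 - b1 != 0 & b3 - b2 != 0]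
  by rewrite !subr_eq0 !(eq_sym b2) !(eq_sym b3).
exists ((y2 - (b2 + b3) * y1 + b2 * b3 * y0) / ((b1 - b2) * (b1 - b3))),
  ((y2 - (b1 + b3) * y1 + b1 * b3 * y0) / ((b2 - b1) * (b2 - b3))),
  ((y2 - (b1 + b2) * y1 + b1 * b2 * y0) / ((b3 - b1) * (b3 - b2))).
by split; field; rewrite ?mulf_neq0 ?d12 ?d13 ?d23 ?d21 ?d31 ?d32.
Qed.

(* The residuals a', b', c' are left to at most one column of W_m and at most two
   columns of H_2m; the bound counts the columns used. *)
Lemma moments_residual (I : eqType) (beta : I -> K) (s : seq I) (a b c : K) :
  uniq s -> (size s <= 3)%N -> {in s, forall j, beta j != 0} -> {in s &, injective beta} ->
  exists xi : I -> K, exists a' b' c',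
    [/\ \sum_(j <- s) xi j + a' = a, \sum_(j <- s) beta j * xi j + b' = b,
        \sum_(j <- s) beta j ^+ 2 * xi j + c' = c &
        (size s + (a' != 0%R) + 2 * ((b' != 0%R) || (c' != 0%R)) <= 3)%N].
Proof.
move=> s_uniq s3 bnz binj; have b_uniq : uniq (map beta s) by rewrite map_inj_in_uniq.
move: s3 bnz b_uniq; case: s {s_uniq binj} => [|j1 [|j2 [|j3 [|? ?]]]] //= _ bnz.
- exists (fun=> 0), a, b, c; rewrite !big_nil !add0r.
  by split=> //; case: (a != 0); case: (_ || _).
- exists (fun=> a), 0, (b - beta j1 * a), (c - beta j1 ^+ 2 * a); rewrite !big_seq1.
  split; [exact: addr0 | exact: subrKC | exact: subrKC | by rewrite eqxx; case: (_ || _)].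
- rewrite inE andbT => b12; have j21 : j2 != j1 by apply: contraNneq b12 => ->.
  have [b1 b2] : beta j1 != 0 /\ beta j2 != 0 by split; apply: bnz; rewrite !inE eqxx ?orbT.
  have [x1 [x2 [e1 e2]]] := vandermonde2_solvable b c b1 b2 b12.
  exists (fun j => if j == j1 then x1 else x2), (a - (x1 + x2)), 0, 0.
  rewrite !big_cons !big_nil !eqxx (negbTE j21) !addr0.
  by split; rewrite ?subrKC ?eqxx //; case: (_ != _).
- rewrite !inE negb_or andbT => /andP[/andP[b12 b13] b23].
  have j21 : j2 != j1 by apply: contraNneq b12 => ->.
  have j31 : j3 != j1 by apply: contraNneq b13 => ->.
  have j32 : j3 != j2 by apply: contraNneq b23 => ->.
  have [x1 [x2 [x3 [e0 e1 e2]]]] := vandermonde3_solvable a b c b12 b13 b23.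
  exists (fun j => if j == j1 then x1 else if j == j2 then x2 else x3), 0, 0, 0.
  by rewrite !big_cons !big_nil !eqxx (negbTE j21) (negbTE j31) (negbTE j32) !addr0 !addrA.
Qed.

End Vandermonde.

Lemma distinct_sum_three_cols_zero r n p (H : 'M['F_2]_(r, n)) (f : 'I_n -> 'I_p) :
  three_cols_zero H f -> distinct_sum (fun j => col j H) f 3 0.
Proof.
case=> i [j [k [fij fik fjk sum0]]].
have := @distinct_sum_seq _ _ _ (fun j => col j H) f [:: i; j; k].
by rewrite /= !inE !negb_or fij fik fjk !big_cons big_nil addr0 addrA sum0; apply.
Qed.

Lemma card_F2cV m : #|{: 'cV['F_2]_m}| = (2 ^ m)%N.
Proof. by rewrite card_mx card_Fp // muln1. Qed.

Lemma card_F2cV_gt3 m : (2 <= m)%N -> (3 < #|{: 'cV['F_2]_m}|)%N.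
Proof. by move=> m2; rewrite card_F2cV (@leq_exp2l 2 2). Qed.

Section Construction.
Variables (F : finFieldType) (m r0 n0 p0 n2 p2 : nat) (phi : F -> 'cV['F_2]_m)
  (H0 : 'M['F_2]_(r0, n0)) (f0 : 'I_n0 -> 'I_p0)
  (H2 : 'M['F_2]_(m + m, n2)) (f2 : 'I_n2 -> 'I_p2) (beta : 'I_n0 -> F).
Hypothesis phiD : {morph phi : x y / x + y}.

Local Notation idx := (HC_index F m n2 n0).
Local Notation C := (HC_col phi H0 H2 beta).

Lemma card_HC_index : #|F| = (2 ^ m)%N -> #|{: idx}| = (2 ^ m * (n0 + 1) + n2 - 1)%N.
Proof.
move=> cardF; have card_nzvec : #|{: nzvec m}| = (2 ^ m).-1.
  by rewrite card_sig -(card_F2cV m) -(cardC1 0); apply: eq_card => w; rewrite !inE.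
rewrite !card_sum card_prod card_nzvec !card_ord cardF.
have := expn_gt0 2 m; lia.
Qed.

Lemma phi0 : phi 0 = 0.
Proof. by apply: (addrI (phi 0)); rewrite -phiD !addr0. Qed.

Lemma HC_covers_H0 R : covers (mx_of_cols C) R -> covers H0 R.
Proof.
move/covers_usubmx; apply: covers_subcols => j.
have -> : col j (usubmx (mx_of_cols C)) = usubmx (C (enum_val j)).
  by apply/matrixP => i k; rewrite !mxE (ord1 k).
case: (enum_val j) => [[w | k] | [i xi]] /=; rewrite col_mxKu; by [left | right; exists i].
Qed.

Definition HC_class (K : finType) (gW : nzvec m -> K) : idx -> (K + 'I_p2) + 'I_p0 :=
  sum_cls (sum_cls gW f2) (fun x => f0 x.1).

Lemma W_distinct_sum (K : finType) (gW : nzvec m -> K) (w : 'cV['F_2]_m) :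
  distinct_sum (C \o inl \o inl) gW (w != 0) (col_mx 0 (col_mx w 0)).
Proof.
have [-> | w0] := eqVneq w 0.
  by have := @distinct_sum_seq _ _ _ (C \o inl \o inl) gW [::]; rewrite big_nil !col_mx0; apply.
by have := @distinct_sum_seq _ _ _ (C \o inl \o inl) gW [:: exist _ w w0]; rewrite big_seq1; apply.
Qed.

Lemma HC_class_surj (K : finType) (gW : nzvec m -> K) :
  (forall k, exists w, gW w = k) -> (forall k, exists j, f0 j = k) ->
  (forall k, exists j, f2 j = k) -> forall c, exists x, HC_class gW x = c.
Proof.
move=> gW_surj f0_surj f2_surj [[k | k] | k].
- by have [w <-] := gW_surj k; exists (inl (inl w)).
- by have [j <-] := f2_surj k; exists (inl (inr j)).
- by have [j <-] := f0_surj k; exists (inr (j, 0)).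
Qed.

Lemma HC_three_zero_H0 (K : finType) (gW : nzvec m -> K) :
  three_cols_zero H0 f0 -> distinct_sum C (HC_class gW) 3 0.
Proof.
move/distinct_sum_three_cols_zero=> zero0.
suff : distinct_sum C (HC_class gW) 3 (col_mx 0 0) by rewrite col_mx0.
apply: (distinct_sum_map (e := fun j => inr (j, 0)) (g := inr) (L := fun u => col_mx u 0)
  _ _ _ _ _ zero0) => //.
- by move=> i j [].
- by move=> i j [].
- by move=> u w; rewrite add_col_mx addr0.
- by move=> j; rewrite /= !mulr0 phi0 !col_mx0.
Qed.

Lemma HC_three_zero_H2 (K : finType) (gW : nzvec m -> K) :
  three_cols_zero H2 f2 -> distinct_sum C (HC_class gW) 3 0.
Proof.
move/distinct_sum_three_cols_zero=> zero2.
suff : distinct_sum C (HC_class gW) 3 (col_mx 0 (col_mx 0 0)) by rewrite !col_mx0.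
apply: (distinct_sum_map (e := fun j => inl (inr j)) (g := fun k => inl (inr k))
  (L := fun u => col_mx 0 (col_mx 0 u)) _ _ _ _ _ zero2) => //.
- by move=> i j [].
- by move=> i j [].
- by move=> u w; rewrite !add_col_mx !addr0.
Qed.

Lemma W_three_classes : (2 <= m)%N ->
  exists gW : nzvec m -> option bool,
    (forall k, exists w, gW w = k) /\ distinct_sum C (HC_class gW) 3 0.
Proof.
move/card_F2cV_gt3/ltnW=> V2.
have [e1 [e2 [e3 [e10 e20 e30 e_uniq sum_e]]]] := three_distinct_nonzero_sum0 (@addrr_F2mx m 1) V2.
move: e_uniq; rewrite /= !inE !negb_or andbT => /andP[/andP[e12 e13] e23].
pose gW (x : nzvec m) :=
  if val x == e1 then Some false else if val x == e2 then Some true else None.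
pose x1 : nzvec m := exist _ e1 e10; pose x2 : nzvec m := exist _ e2 e20.
pose x3 : nzvec m := exist _ e3 e30.
have [gW1 gW2 gW3] : [/\ gW x1 = Some false, gW x2 = Some true & gW x3 = None].
  by rewrite /gW /= eqxx eq_sym (negbTE e12) eqxx eq_sym (negbTE e13) eq_sym (negbTE e23).
exists gW; split; first by case=> [[]|]; [exists x2 | exists x1 | exists x3].
have := @distinct_sum_seq _ _ _ C (HC_class gW) [:: inl (inl x1); inl (inl x2); inl (inl x3)].
rewrite /= gW1 gW2 gW3 !big_cons big_nil /= addr0 !add_col_mx !addr0 addrA sum_e !col_mx0.
by apply.
Qed.

Section Covering.
Variable phiI : 'cV['F_2]_m -> F.
Hypotheses (phiIK : cancel phiI phi)
  (P0 : RL_partition H0 3 0 f0) (P2 : RL_partition H2 2 0 f2)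
  (beta_neq0 : forall j, beta j != 0) (beta_sep : forall i j, f0 i != f0 j -> beta i != beta j).

Lemma H2_distinct_sum (v : 'cV['F_2]_(m + m)) :
  exists2 k, (k <= 2 * (v != 0%R))%N & distinct_sum (C \o inl \o inr) f2 k (col_mx 0 (col_mx 0 v)).
Proof.
have [-> | v0] := eqVneq v 0.
  exists 0%N => //.
  by have := @distinct_sum_seq _ _ _ (C \o inl \o inr) f2 [::]; rewrite big_nil !col_mx0; apply.
have [S [/andP[_ S2] [f2_inj eS]]] := P2.2 v; exists #|S|; first exact: S2.
have := @distinct_sum_set _ _ _ (C \o inl \o inr) _ _ f2_inj.
by rewrite /= !sum_col_mx !big1_eq -eS.
Qed.

Lemma A_distinct_sum (S : {set 'I_n0}) (xi : 'I_n0 -> F) : {in S &, injective f0} ->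
  distinct_sum (C \o inr) (fun x => f0 x.1) #|S|
    (col_mx (colsum H0 S) (col_mx (phi (\sum_(j in S) xi j))
       (col_mx (phi (\sum_(j in S) beta j * xi j)) (phi (\sum_(j in S) beta j ^+ 2 * xi j))))).
Proof.
move=> f0_inj; have := @distinct_sum_set _ _ _ (fun j => C (inr (j, xi j))) _ _ f0_inj.
rewrite /= !sum_col_mx -!(big_morph phi phiD phi0).
by apply: (distinct_sum_map (e := fun j => (j, xi j)) (g := id) (L := id)) => // i j [].
Qed.

Lemma HC_covers_distinct (K : finType) (gW : nzvec m -> K) :
  covers_distinct C (HC_class gW) 3 0.
Proof.
move=> v; rewrite -[v]vsubmxK -[dsubmx v]vsubmxK -[dsubmx (dsubmx v)]vsubmxK.
set u := usubmx v; set a := usubmx (dsubmx v).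
set b := usubmx (dsubmx (dsubmx v)); set c := dsubmx (dsubmx (dsubmx v)).
have [S [/andP[_ S3] [f0_inj <-]]] := P0.2 u.
have beta_inj : {in enum S &, injective beta}.
  move=> i j; rewrite !mem_enum => iS jS e; apply: f0_inj => //; apply/eqP.
  by apply/negPn/negP => /beta_sep; rewrite e eqxx.
have [|xi [a' [b' [c' [ea eb ec bound]]]]] :=
  moments_residual (phiI a) (phiI b) (phiI c) (enum_uniq S) _ (fun j _ => beta_neq0 j) beta_inj.
  by rewrite -cardE.
rewrite !big_enum /= in ea eb ec; rewrite -cardE in bound.
have [k2 k2_le sum2] := H2_distinct_sum (col_mx (phi b') (phi c')).
have := distinct_sum_add (distinct_sum_add (W_distinct_sum gW (phi a')) sum2)
  (A_distinct_sum xi f0_inj).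
rewrite !add_col_mx !add0r !addr0 add_col_mx -!phiD (addrC a') (addrC b') (addrC c').
rewrite ea eb ec !phiIK.
move=> sum_v; exists ((phi a' != 0%R) + k2 + #|S|)%N => //.
have a'_le : ((phi a' != 0%R) <= (a' != 0%R))%N.
  by have [->|_] := eqVneq a' 0; rewrite ?phi0 ?eqxx //; case: (_ != _).
have bc'_le : ((col_mx (phi b') (phi c') != 0%R) <= (b' != 0%R) || (c' != 0%R))%N.
  have [->|_] := eqVneq b' 0; have [->|_] := eqVneq c' 0;
    by rewrite ?phi0 ?col_mx0 ?eqxx //=; case: (_ != _).
lia.
Qed.

Lemma HC_admits_partition (K : finType) (gW : nzvec m -> K) l q :
  (forall k, exists w, gW w = k) -> covers_distinct C (HC_class gW) 3 l ->
  (#|K| + p2 + p0 <= q)%N -> admits_partition_atmost (HC phi H0 H2 beta) 3 l q.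
Proof.
move=> gW_surj cov Kq; apply: admits_partition_mx_of_cols cov _.
  exact: HC_class_surj gW_surj P0.1 P2.1.
by rewrite !card_sum !card_ord.
Qed.

Section TrivialPartition.
Hypotheses (phiK : cancel phi phiI) (cardF : #|F| = (2 ^ m)%N) (m2 : (2 <= m)%N)
  (H2_23 : forall v : 'cV['F_2]_(m + m), exists S : {set 'I_n2},
     ((#|S| == 2%N) || (#|S| == 3%N)) /\ colsum H2 S = v).

Lemma H2_split (v : 'cV['F_2]_(m + m)) :
  exists2 k, (2 <= k <= 3)%N & distinct_sum C id k (col_mx 0 (col_mx 0 v)).
Proof.
have [S [S23 <-]] := H2_23 v; exists #|S|; first by case/orP: S23 => /eqP->.
have := @distinct_sum_set _ _ _ (fun j => col j H2) id S (fun _ _ _ _ => id).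
apply: (distinct_sum_map (e := fun j => inl (inr j)) (g := fun j => inl (inr j))
  (L := fun u => col_mx 0 (col_mx 0 u))) => //.
- by move=> i j [].
- by move=> i j [].
- by move=> u w; rewrite !add_col_mx !addr0.
Qed.

Lemma addrr_F (x : F) : x + x = 0.
Proof. by apply: (can_inj phiK); rewrite phiD addrr_F2mx phi0. Qed.

Lemma HC_col_split x : exists2 k, (2 <= k <= 3)%N & distinct_sum C id k (C x).
Proof.
case: x => [[[w w0] | j] | [j xi]]; last first.
- have F3 : (3 < #|F|)%N by rewrite cardF -card_F2cV card_F2cV_gt3.
  have [y1 [y2 [y3 [y12 y13 y23 sum_y]]]] := sum_three_distinct addrr_F xi F3.
  exists 3%N => //.
  have := @distinct_sum_seq _ _ _ C id [:: inr (j, y1); inr (j, y2); inr (j, y3)].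
  rewrite /= !big_cons big_nil /= addr0 !add_col_mx -!phiD -!mulrDr !addrA sum_y.
  rewrite addrr_F2mx add0r; apply.
  by rewrite !inE !negb_or !(inj_eq inr_inj) !xpair_eqE eqxx /= y12 y13 y23.
- exact: H2_split.
- have [w1 [w2 [w10 w20 w12 sum_w]]] :=
    sum_two_distinct_nonzero (@addrr_F2mx m 1) (ltnW (card_F2cV_gt3 m2)) w0.
  exists 2%N => //.
  have := @distinct_sum_seq _ _ _ C id [:: inl (inl (exist _ w1 w10)); inl (inl (exist _ w2 w20))].
  rewrite /= !big_cons big_nil /= addr0 add_col_mx add0r add_col_mx addr0 sum_w; apply.
  by rewrite inE andbT !(inj_eq inl_inj) -val_eqE.
Qed.

Lemma HC_covers_distinct_id : covers_distinct C id 3 2.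
Proof.
move=> v; have [k k3] := HC_covers_distinct (fun _ : nzvec m => tt) v.
move/(distinct_sum_refine (cls' := id) (fun _ => erefl)).
case: k k3 => [|[|k]] k3 sum_v; last by exists k.+2.
- have [k' k'23] := H2_split 0; rewrite !col_mx0 -(distinct_sum0 sum_v).
  by exists k'.
- by have [x ->] := distinct_sum1 sum_v; apply: HC_col_split.
Qed.

End TrivialPartition.

End Covering.

End Construction.

Theorem theorem7p3 (F : finFieldType) (m r0 n0 p0 n2 p2 : nat)
  (phi : F -> 'cV['F_2]_m)
  (H0 : 'M['F_2]_(r0, n0)) (f0 : 'I_n0 -> 'I_p0)
  (H2 : 'M['F_2]_(m + m, n2)) (f2 : 'I_n2 -> 'I_p2)
  (beta : 'I_n0 -> F) :
  #|F| = (2 ^ m)%N ->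
  (forall x y, phi (x + y) = phi x + phi y) -> bijective phi ->
  covering_radius H0 3 -> RL_partition H0 3 0 f0 ->
  covering_radius H2 2 -> RL_partition H2 2 0 f2 ->
  (2 <= m)%N -> (p0 <= 2 ^ m - 1)%N ->
  (forall j, beta j != 0) ->
  (forall i j, f0 i != f0 j -> beta i != beta j) ->
  let H := HC phi H0 H2 beta in
  #|{: HC_index F m n2 n0}| = (2 ^ m * (n0 + 1) + n2 - 1)%N /\
  \rank H = (r0 + 3 * m)%N /\
  covering_radius H 3 /\
  admits_partition_atmost H 3 0 (p0 + p2 + 1) /\
  admits_partition_atmost H 3 1 (p0 + p2 + 3) /\
  (three_cols_zero H0 f0 \/ three_cols_zero H2 f2 ->
     admits_partition_atmost H 3 1 (p0 + p2 + 1)) /\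
  ((forall v : 'cV['F_2]_(m + m), exists S : {set 'I_n2},
       ((#|S| == 2%N) || (#|S| == 3%N)) /\ colsum H2 S = v) ->
     RL_partition H 3 2 (fun j => j)).
Proof.
move=> cardF phiD [phiI phiK phiIK] CR0 P0 _ P2 m2 _ beta_neq0 beta_sep H.
have covers_HC := HC_covers_distinct phiD phiIK P0 P2 beta_neq0 beta_sep.
have [gW3 [gW3_surj zero3]] := W_three_classes phi H0 f0 H2 f2 beta m2.
have tt_surj (k : unit) : exists w : nzvec m, tt = k.
  by case: k; have [w _] := gW3_surj None; exists w.
have part30 : admits_partition_atmost H 3 0 (p0 + p2 + 1).
  by apply: (HC_admits_partition P0 P2) tt_surj (covers_HC _ _) _; rewrite card_unit; lia.
have covH : covers H 3 := admits_partition_covers part30.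
split; first exact: card_HC_index.
split; first by rewrite (covers_rank covH); lia.
split; first by split=> // R /HC_covers_H0 /CR0.2.
split=> //; split.
  apply: (HC_admits_partition P0 P2) gW3_surj
    (covers_distinct1_of_zero_sum (covers_HC _ _) _ zero3) _ => //.
  by rewrite card_option card_bool; lia.
split.
  move=> zero_cols; apply: (HC_admits_partition P0 P2) tt_surj
    (covers_distinct1_of_zero_sum (covers_HC _ _) (k := 3) _ _) _ => //.
  - by case: zero_cols; [apply: HC_three_zero_H0 | apply: HC_three_zero_H2].
  - by rewrite card_unit; lia.
move=> H2_23; apply: (RL_partition_mx_of_cols (cls := id)) => [j | c |].
- by rewrite enum_valK.
- by exists c.
- exact: (HC_covers_distinct_id (f0 := f0) (f2 := f2)).
Qed.
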